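(* Assume $\Delta$ is a tight SID all of whose rules are of form (I) or (II), and let $\phi$ be a tight sentence over $\Delta$ (with $\Delta$ containing a rule $\mathsf A_\phi()\leftarrow\phi$). For every $\mathcal T\in\mathcal R(\phi)$ and every configuration $(\alpha,m)$ with $(\alpha,m)\models_\Delta\chi(\mathcal T)$, we have $(\alpha,m)\simeq(\alpha_{\mathcal T},m_{\mathcal T})$.
   Context: Signature $\Sigma=(\{\mathsf C_1..\mathsf C_N\},\mathfrak I,\mathfrak P)$ with pairwise disjoint port sets $\mathfrak P(\mathsf C_i)$, port tuples $\mathfrak P(\mathsf I)$ ($\langle\mathfrak P(\mathsf I)\rangle_k$ the $k$-th, $\mathrm{comp}(p)$ the type owning $p$); behavior map with pairwise disjoint state sets $Q_{\mathsf C_i}$. Architectures $\alpha$: $\alpha(\mathsf C)\subseteq\mathbb U$, $\alpha(\mathsf I)\subseteq\mathbb U^{\#(\mathsf I)}$; a configuration is $(\alpha,m)$ with $m$ a set of places $q[u]$ containing, for each $\mathsf C$ and $u\in\alpha(\mathsf C)$, exactly one $q[u]$ with $q\in Q_{\mathsf C}$. CL formulas $\phi::=\mathsf{emp}\mid\mathsf C(x)\mid\mathsf C^q(x)\mid\mathsf I(\vec x)\mid\mathsf A(\vec x)\mid\phi*\phi\mid\exists x.\phi$, SID rules $\mathsf A(\vec x)\leftarrow\phi$ with $\mathrm{fv}(\phi)=\vec x$; $\models^s_\Delta$ is the least relation where $\mathsf C^q(x)$ denotes the single component $\mathsf C[s(x)]$ with marking $\{q[s(x)]\}$, $\mathsf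 I(\vec x)$ the single interaction $\mathsf I[s(\vec x)]$ with empty marking, $\mathsf{emp}$ the empty configuration, predicate atoms unfold by rules, $*$ is union of configurations with disjoint component sets and interaction relations, $\exists$ chooses a value. Rewriting trees $\mathcal R(\phi)$: finite labellings by rules of $\Delta$ of finite prefix-closed complete subsets of $[1,\kappa]^*$ ($\kappa$ bounds predicate-atom occurrences), root labelled $(\mathsf A(\vec x)\leftarrow\phi)$, a node labelled $(\dots\leftarrow\psi_0)$ having exactly children $1..\mathrm{npred}(\psi_0)$, child $i$ labelled by a rule whose head predicate is that of the $i$-th predicate atom of $\psi_0$. $\chi(\mathcal T)$: the root body with each $i$-th predicate atom $\mathsf A_i(\vec y_i)$ replaced by $\chi(\mathcal T|_i)[\vec x_i/\vec y_i]$, $\mathsf A_i(\vec x_i)$ the head of $\mathcal T(i)$, bound variables renamed apart (quantified at the node whose rule introduces them). Rule forms: (I) $\mathsf A(x_1)\leftarrow\mathsf C^q(x_1)$; (II) $\mathsf A(x_1..x_n)\leftarrow\exists y_1..y_k.\ \varphi*\psi*\mathop{\ast}_{i=1}^p\mathsf A_i(\vec z^i)$, $p\ge1$, $\varphi\in\{\mathsf{emp}\}\cup\{\mathsf C^q(x_1)\}$, $\psi$ a separating conjunction of interaction atoms, each variable of $(\{x_1..x_n\}\setminus\mathrm{fv}(\varphi))\cup\{y_1..y_k\}$ occurring exactly once as argument of the predicate atoms and no other arguments. Canonical model ($\mathbb U=[1,\kappa]^*$): $s^\epsilon_{\mathcal T}(x)=\epsilon$ if $x$ occurs in a component atom of the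 root rule, $s^\epsilon_{\mathcal T}(x)=i\cdot s^\epsilon_{\mathcal T|_i}(x_j)$ if $x$ is the $j$-th argument of the $i$-th predicate atom and $x_j$ the $j$-th head parameter of $\mathcal T(i)$; for $\chi(\mathcal T)=\exists\vec z.\eta$, $s_{\mathcal T}(x)=s^\epsilon_{\mathcal T}(x)$ for free $x$, $=w\cdot s^\epsilon_{\mathcal T|_w}(x)$ for $x$ quantified at $w$; $\alpha_{\mathcal T}(\mathsf C)=\{s_{\mathcal T}(x):\mathsf C^q(x)\in\eta\}$, $\alpha_{\mathcal T}(\mathsf I)=\{s_{\mathcal T}(\vec x):\mathsf I(\vec x)\in\eta\}$, $m_{\mathcal T}=\{q[s_{\mathcal T}(x)]:\mathsf C^q(x)\in\eta\}$. Tightness: a profile $\lambda$ maps predicate symbols of nonzero arity to tuples of component types of matching length; $\phi$ is tight for $\lambda$ if each argument $x_j$ of each interaction atom $\mathsf I(\vec x)$ of $\phi$ occurs in a component atom $\mathsf C^q(x_j)$ of $\phi$ with $\langle\mathfrak P(\mathsf I)\rangle_j\in\mathfrak P(\mathsf C)$ or as the $\ell$-th argument of a predicate atom $\mathsf A$ of $\phi$ with $\langle\mathfrak P(\mathsf I)\rangle_j\in\mathfrak P(\langle\lambda(\mathsf A)\rangle_\ell)$; $\Delta$ is tight if for some $\lambda_\Delta$ every rule body is tight for $\lambda_\Delta$ and each head parameter $x_j$ of $\mathsf A$ occurs in a component atom $\mathsf C^q(x_j)$ with $\mathsf C=\langle\lambda_\Delta(\mathsf A)\rangle_j$ or as the $\ell$-th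 argument of a predicate atom $\mathsf B$ with $\langle\lambda_\Delta(\mathsf B)\rangle_\ell=\langle\lambda_\Delta(\mathsf A)\rangle_j$; a formula is tight if tight for $\lambda_\Delta$. Symmetry: for bijections $\vec f=\langle f_1..f_N\rangle$, $f_i:\mathbb U\to\mathbb U$, $(\vec f(\alpha))(\mathsf C_i)=f_i(\alpha(\mathsf C_i))$, $(\vec f(\alpha))(\mathsf I)=\{\langle f_{i_1}(u_1)..f_{i_k}(u_k)\rangle:\langle u_1..u_k\rangle\in\alpha(\mathsf I)\}$ where $\mathsf C_{i_j}=\mathrm{comp}(\langle\mathfrak P(\mathsf I)\rangle_j)$, and $\vec f(m)=\{q[f_i(u)]:q[u]\in m,\ q\in Q_{\mathsf C_i}\}$. $(\alpha_1,m_1)\simeq(\alpha_2,m_2)$ iff some such $\vec f$ has $\vec f(\alpha_1)=\alpha_2$ and $\vec f(m_1)=m_2$. *)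

From Stdlib Require Import List Arith PeanoNat.
Import ListNotations.
Set Implicit Arguments.
Unset Strict Implicit.

(* Component types CT, interaction types IT, ports Port with the owner *)
(* map pcomp (this encodes pairwise disjoint port sets P(C)), port      *)
(* tuples iports I (so #(I) = length (iports I)), states State with the *)
(* owner map scomp (pairwise disjoint state sets Q_C), predicate        *)
(* symbols Pred.                                                        *)
Record sig := {
  CT : Type;
  IT : Type;
  Port : Type;
  pcomp : Port -> CT;
  iports : IT -> list Port;
  State : Type;
  scomp : State -> CT;
  Pred : Type
}.

(* The universe used throughout: U = [1,kappa]^* (words over positive
   naturals); we simply take all finite words of naturals. *)
Definition U := list nat.

Section CL.
Variable Sg : sig.

(* Configurations (alpha, m): alpha(C) subset of U, alpha(I) subset of
   U^#(I), m a set of places q[u]. *)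
Record config := {
  cC : CT Sg -> U -> Prop;
  cI : IT Sg -> list U -> Prop;
  cM : State Sg -> U -> Prop
}.

Inductive form (V : Type) : Type :=
| Emp : form V
| Comp : CT Sg -> V -> form V
| CompQ : CT Sg -> State Sg -> V -> form V
| Int : IT Sg -> list V -> form V
| PA : Pred Sg -> list V -> form V
| Sep : form V -> form V -> form V
| Ex : V -> form V -> form V.

Arguments Emp {V}.

Record rule := mkRule { rhead : Pred Sg; rparams : list nat; rbody : form nat }.

Definition upd (V : Type) (d : forall a b : V, {a = b} + {a <> b})
  (s : V -> U) (x : V) (u : U) : V -> U :=
  fun v => if d v x then u else s v.

Definition is_empty (c : config) : Prop :=
  (forall C u, ~ cC c C u) /\ (forall I t, ~ cI c I t) /\ (forall q u, ~ cM c q u).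

Definition disjoint (c1 c2 : config) : Prop :=
  (forall C u, ~ (cC c1 C u /\ cC c2 C u)) /\
  (forall I t, ~ (cI c1 I t /\ cI c2 I t)).

Definition is_union (c c1 c2 : config) : Prop :=
  (forall C u, cC c C u <-> cC c1 C u \/ cC c2 C u) /\
  (forall I t, cI c I t <-> cI c1 I t \/ cI c2 I t) /\
  (forall q u, cM c q u <-> cM c1 q u \/ cM c2 q u).

Inductive sat (D : list rule) : forall (V : Type),
    (forall a b : V, {a = b} + {a <> b}) -> (V -> U) -> config -> form V -> Prop :=
| sat_emp V d s c : is_empty c -> @sat D V d s c Emp
| sat_comp V d s c C x :
    (forall C' u, cC c C' u <-> C' = C /\ u = s x) ->
    (forall I t, ~ cI c I t) -> (forall q u, ~ cM c q u) ->
    @sat D V d s c (Comp C x)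
| sat_compq V d s c C q x :
    (forall C' u, cC c C' u <-> C' = C /\ u = s x) ->
    (forall I t, ~ cI c I t) ->
    (forall q' u, cM c q' u <-> q' = q /\ u = s x) ->
    @sat D V d s c (CompQ C q x)
| sat_int V d s c I xs :
    (forall C u, ~ cC c C u) ->
    (forall I' t, cI c I' t <-> I' = I /\ t = map s xs) ->
    (forall q u, ~ cM c q u) ->
    @sat D V d s c (Int I xs)
| sat_pred V d s c A xs r (s' : nat -> U) :
    In r D -> rhead r = A ->
    map s' (rparams r) = map s xs ->
    @sat D nat Nat.eq_dec s' c (rbody r) ->
    @sat D V d s c (PA A xs)
| sat_sep V d s c c1 c2 f g :
    disjoint c1 c2 -> is_union c c1 c2 ->
    @sat D V d s c1 f -> @sat D V d s c2 g ->
    @sat D V d s c (Sep f g)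
| sat_ex V d s c x f (u : U) :
    @sat D V d (upd d s x u) c f -> @sat D V d s c (Ex x f).

Fixpoint preds (V : Type) (f : form V) : list (Pred Sg * list V) :=
  match f with
  | PA A xs => [(A, xs)]
  | Sep f g => preds f ++ preds g
  | Ex _ f => preds f
  | _ => []
  end.

Fixpoint compatoms (V : Type) (f : form V) : list (CT Sg * State Sg * V) :=
  match f with
  | CompQ C q x => [(C, q, x)]
  | Sep f g => compatoms f ++ compatoms g
  | Ex _ f => compatoms f
  | _ => []
  end.

Fixpoint compvars (V : Type) (f : form V) : list V :=
  match f with
  | Comp _ x => [x]
  | CompQ _ _ x => [x]
  | Sep f g => compvars f ++ compvars g
  | Ex _ f => compvars f
  | _ => []
  end.

Fixpoint intatoms (V : Type) (f : form V) : list (IT Sg * list V) :=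
  match f with
  | Int i xs => [(i, xs)]
  | Sep f g => intatoms f ++ intatoms g
  | Ex _ f => intatoms f
  | _ => []
  end.

Fixpoint fv (f : form nat) : list nat :=
  match f with
  | Emp => []
  | Comp _ x => [x]
  | CompQ _ _ x => [x]
  | Int _ xs => xs
  | PA _ xs => xs
  | Sep f g => fv f ++ fv g
  | Ex x f => remove Nat.eq_dec x (fv f)
  end.

Definition wf_rule (r : rule) : Prop :=
  NoDup (rparams r) /\
  (forall v, In v (fv (rbody r)) <-> In v (rparams r)) /\
  (forall I xs, In (I, xs) (intatoms (rbody r)) -> length xs = length (iports I)) /\
  (forall C q x, In (C, q, x) (compatoms (rbody r)) -> scomp q = C).

Definition wf_SID (D : list rule) : Prop :=
  (forall r, In r D -> wf_rule r) /\
  (forall r1 r2 A ys, In r1 D -> In r2 D -> In (A, ys) (preds (rbody r1)) ->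
     rhead r2 = A -> length ys = length (rparams r2)).

Definition exs (ys : list nat) (f : form nat) : form nat := fold_right (@Ex nat) f ys.

Inductive iconj : form nat -> Prop :=
| iconj_emp : iconj Emp
| iconj_int I xs : iconj (Int I xs)
| iconj_sep f g : iconj f -> iconj g -> iconj (Sep f g).

Inductive pconj : form nat -> Prop :=
| pconj_pa A xs : pconj (PA A xs)
| pconj_sep f g : pconj f -> pconj g -> pconj (Sep f g).

Definition pargs (f : form nat) : list nat := concat (map snd (preds f)).

Definition form_I (r : rule) : Prop :=
  exists C q x, rparams r = [x] /\ rbody r = CompQ C q x /\ scomp q = C.

Definition form_II (r : rule) : Prop :=
  exists (ys : list nat) (phi psi P : form nat),
    rbody r = exs ys (Sep phi (Sep psi P)) /\
    (phi = Emp \/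
     exists C q x1 rest, rparams r = x1 :: rest /\ phi = CompQ C q x1 /\ scomp q = C) /\
    iconj psi /\ pconj P /\
    NoDup (pargs P) /\
    (forall v, In v (pargs P) <->
       ((In v (rparams r) /\ ~ In v (fv phi)) \/ In v ys)).

Definition profile := Pred Sg -> list (CT Sg).

Definition tight_form (lam : profile) (f : form nat) : Prop :=
  forall I xs j x p,
    In (I, xs) (intatoms f) -> nth_error xs j = Some x ->
    nth_error (iports I) j = Some p ->
    (exists C q, In (C, q, x) (compatoms f) /\ pcomp p = C) \/
    (exists A ys l C, In (A, ys) (preds f) /\ nth_error ys l = Some x /\
                      nth_error (lam A) l = Some C /\ pcomp p = C).

Definition tight_SID (D : list rule) (lam : profile) : Prop :=
  (forall r, In r D -> length (lam (rhead r)) = length (rparams r)) /\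
  (forall r, In r D -> tight_form lam (rbody r)) /\
  (forall r j x, In r D -> nth_error (rparams r) j = Some x ->
     exists C, nth_error (lam (rhead r)) j = Some C /\
       ((exists q, In (C, q, x) (compatoms (rbody r))) \/
        (exists B ys l, In (B, ys) (preds (rbody r)) /\ nth_error ys l = Some x /\
                        nth_error (lam B) l = Some C))).

(* Rewriting trees: a node is labelled by a rule, children 1..npred
   (stored as a list, child i at list index i-1). *)
Inductive rtree := Node : rule -> list rtree -> rtree.

Definition label (t : rtree) : rule := match t with Node r _ => r end.

Inductive rtree_ok (D : list rule) : rtree -> Prop :=
| ok_node r ch :
    In r D ->
    length ch = length (preds (rbody r)) ->
    (forall i t A ys, nth_error ch i = Some t -> nth_error (preds (rbody r)) i = Some (A, ys) ->
        rhead (label t) = A) ->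
    (forall t, In t ch -> rtree_ok D t) ->
    rtree_ok D (Node r ch).

(* T in R(phi), for the rule r0 = (A_phi() <- phi) labelling the root *)
Definition in_R (D : list rule) (r0 : rule) (T : rtree) : Prop :=
  rtree_ok D T /\ label T = r0.

(* chi(T).  Variables of chi(T): inl x for a free variable x (head
   parameter of the root), inr (w, y) for the variable y quantified at
   node w (bound variables renamed apart). *)
Definition var' := (nat + (list nat * nat))%type.

Definition vdec : forall a b : var', {a = b} + {a <> b}.
Proof. decide equality; decide equality; [apply Nat.eq_dec | apply list_eq_dec, Nat.eq_dec]. Defined.

Fixpoint lookup (z : nat) (ps : list nat) (vs : list var') : option var' :=
  match ps, vs with
  | p :: ps', v :: vs' => if Nat.eq_dec z p then Some v else lookup z ps' vs'
  | _, _ => None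
  end.

(* instantiate a rule body at node w: rename variables via rho, replace
   the k-th predicate atom (0-based) by F k (renamed arguments). *)
Fixpoint inst (w : list nat) (F : nat -> list var' -> form var')
  (rho : nat -> var') (f : form nat) (k : nat) : form var' * nat :=
  match f with
  | Emp => (Emp, k)
  | Comp C x => (Comp C (rho x), k)
  | CompQ C q x => (CompQ C q (rho x), k)
  | Int i xs => (Int i (map rho xs), k)
  | PA _ xs => (F k (map rho xs), S k)
  | Sep f g =>
      let (f', k1) := inst w F rho f k in
      let (g', k2) := inst w F rho g k1 in (Sep f' g', k2)
  | Ex y f =>
      let (f', k1) := inst w F (fun v => if Nat.eq_dec v y then inr (w, y) else rho v) f k in
      (Ex (inr (w, y)) f', k1)
  end.

Fixpoint chi (t : rtree) : list nat -> (nat -> var') -> form var' :=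
  match t with
  | Node r ch =>
      let info := map (fun c => (rparams (label c), chi c)) ch in
      fun w sigma =>
        let F k args :=
          match nth_error info k with
          | Some (ps, g) =>
              g (w ++ [S k])
                (fun z => match lookup z ps args with
                          | Some v => v | None => inr (w ++ [S k], z) end)
          | None => Emp
          end in
        let rho v := if in_dec Nat.eq_dec v (rparams r) then sigma v else inr (w, v) in
        fst (inst w F rho (rbody r) 0)
  end.

Definition chiT (T : rtree) : form var' := chi T [] inl.

Fixpoint index_of (x : nat) (ys : list nat) : nat :=
  match ys with
  | [] => 0
  | y :: ys' => if Nat.eq_dec x y then 0 else S (index_of x ys')
  end.

Fixpoint find_arg (x : nat) (l : list (Pred Sg * list nat)) : option (nat * nat) :=
  match l with
  | [] => None
  | (_, ys) :: l' =>
      if in_dec Nat.eq_dec x ys then Some (0, index_of x ys)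
      else match find_arg x l' with Some (i, j) => Some (S i, j) | None => None end
  end.

Fixpoint seps (t : rtree) : nat -> U :=
  match t with
  | Node r ch =>
      let info := map (fun c => (rparams (label c), seps c)) ch in
      fun x =>
        if in_dec Nat.eq_dec x (compvars (rbody r)) then []
        else match find_arg x (preds (rbody r)) with
             | Some (i, j) =>
                 match nth_error info i with
                 | Some (ps, g) => S i :: g (nth j ps 0)
                 | None => []
                 end
             | None => []
             end
  end.

(* subtree T|_w, positions 1-based *)
Fixpoint subtree (t : rtree) (w : list nat) : option rtree :=
  match w with
  | [] => Some t
  | i :: w' =>
      match t with
      | Node _ ch =>
          match i with
          | 0 => None
          | S i' => match nth_error ch i' with Some c => subtree c w' | None => None end
          end
      end
  end.

Definition sT (T : rtree) (v : var') : U :=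
  match v with
  | inl x => seps T x
  | inr (w, y) => match subtree T w with Some t => w ++ seps t y | None => [] end
  end.

Definition canon (T : rtree) : config := {|
  cC := fun C u => exists q v, In (C, q, v) (compatoms (chiT T)) /\ sT T v = u;
  cI := fun I t => exists vs, In (I, vs) (intatoms (chiT T)) /\ map (sT T) vs = t;
  cM := fun q u => exists C v, In (C, q, v) (compatoms (chiT T)) /\ sT T v = u
|}.

Definition bij_family (f : CT Sg -> U -> U) : Prop :=
  forall C, exists g : U -> U, (forall u, g (f C u) = u) /\ (forall u, f C (g u) = u).

Fixpoint map_tuple (f : CT Sg -> U -> U) (ps : list (Port Sg)) (t : list U) : list U :=
  match ps, t with
  | p :: ps', u :: t' => f (pcomp p) u :: map_tuple f ps' t'
  | _, _ => []
  end.

Definition symmetric (c1 c2 : config) : Prop :=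
  exists f : CT Sg -> U -> U, bij_family f /\
    (forall C u, cC c2 C u <-> exists v, cC c1 C v /\ f C v = u) /\
    (forall I t, cI c2 I t <-> exists t', cI c1 I t' /\ map_tuple f (iports I) t' = t) /\
    (forall q u, cM c2 q u <-> exists v, cM c1 q v /\ f (scomp q) v = u).

End CL.

Arguments Emp {Sg V}.

(* Every node of a rewriting tree contributes at most one component atom to
   chi(T), and in the canonical model that component sits at the node's own
   position; hence s_T is injective on the components of chi(T).  Any model of
   chi(T) is the image of some valuation g of its variables, and g is injective
   on each component type because separating conjunction keeps components
   disjoint.  So for each component type, g x |-> s_T x is a bijection between
   finitely many points, which extends to a bijection of U.  By tightness every
   argument of an interaction atom is also the variable of a component atom of
   the type of the corresponding port, so these bijections also carry the
   interactions of one model onto those of the other. *)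

From Stdlib Require Import List PeanoNat Lia Classical ClassicalEpsilon FunctionalExtensionality.
Import ListNotations.
Set Implicit Arguments.
Unset Strict Implicit.

Definition swap_words (a b u : U) : U :=
  if list_eq_dec Nat.eq_dec u a then b
  else if list_eq_dec Nat.eq_dec u b then a else u.

Lemma swap_words_involutive a b u : swap_words a b (swap_words a b u) = u.
Proof.
  unfold swap_words.
  destruct (list_eq_dec Nat.eq_dec u a) as [->|]; [|destruct (list_eq_dec Nat.eq_dec u b) as [->|]].
  - destruct (list_eq_dec Nat.eq_dec b b), (list_eq_dec Nat.eq_dec b a); congruence.
  - destruct (list_eq_dec Nat.eq_dec a a); congruence.
  - destruct (list_eq_dec Nat.eq_dec u a), (list_eq_dec Nat.eq_dec u b); congruence.
Qed.

(* Extend by induction on [L], post-composing with a transposition for each new point. *)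
Lemma finite_correspondence_extends (A : Type) (L : list A) (P : A -> Prop) (fa fb : A -> U) :
  (forall x y, In x L -> In y L -> P x -> P y -> (fa x = fa y <-> fb x = fb y)) ->
  exists h h' : U -> U, (forall u, h' (h u) = u) /\ (forall u, h (h' u) = u) /\
    (forall x, In x L -> P x -> h (fa x) = fb x).
Proof.
  induction L as [|a L IH]; intros Hc.
  - exists (fun u => u), (fun u => u). repeat split; auto. intros x [].
  - destruct IH as (h & h' & K1 & K2 & Hh); [intros; apply Hc; simpl; auto|].
    destruct (classic (P a)) as [Pa|nPa].
    2:{ exists h, h'. repeat split; auto. intros x [<-|Hx] Px; auto; contradiction. }
    destruct (classic (exists y, In y L /\ P y /\ fa y = fa a)) as [(y & Hy & Py & Ey)|Hnew].
    { exists h, h'. repeat split; auto. intros x [<-|Hx] Px; auto.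
      rewrite <- Ey, Hh by auto. apply (Hc y a); simpl; auto. }
    set (z := h (fa a)).
    exists (fun u => swap_words z (fb a) (h u)), (fun u => h' (swap_words z (fb a) u)).
    repeat split.
    + intros u. rewrite swap_words_involutive; auto.
    + intros u. rewrite K2; apply swap_words_involutive.
    + intros x [<-|Hx] Px.
      { unfold swap_words; fold z. destruct (list_eq_dec Nat.eq_dec z z); congruence. }
      assert (N1 : fb x <> fb a).
      { intros E; apply Hnew; exists x; repeat split; auto. apply (Hc x a); simpl; auto. }
      assert (N2 : fb x <> z).
      { intros E; apply Hnew; exists x; repeat split; auto.
        rewrite <- Hh in E by auto. rewrite <- (K1 (fa x)), E. apply K1. }
      rewrite Hh by auto. unfold swap_words.
      destruct (list_eq_dec Nat.eq_dec (fb x) z), (list_eq_dec Nat.eq_dec (fb x) (fb a)); congruence.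
Qed.

Section Models.
Variable S : sig.

Fixpoint atom_vars (V : Type) (f : form S V) : list V :=
  match f with
  | Emp => []
  | Comp _ x | CompQ _ _ x => [x]
  | Int _ xs | PA _ xs => xs
  | Sep a b => atom_vars a ++ atom_vars b
  | Ex _ a => atom_vars a
  end.

Fixpoint bound_vars (V : Type) (f : form S V) : list V :=
  match f with
  | Sep a b => bound_vars a ++ bound_vars b
  | Ex y a => y :: bound_vars a
  | _ => []
  end.

(* The shape of the fully unfolded [chi T]: no predicate atoms, only typed
   component atoms, and bound variables renamed apart. *)
Fixpoint hygienic (V : Type) (f : form S V) : Prop :=
  match f with
  | Emp | CompQ _ _ _ | Int _ _ => True
  | Comp _ _ | PA _ _ => False
  | Sep a b => hygienic a /\ hygienic b /\
      (forall v, In v (atom_vars a) -> ~ In v (bound_vars b)) /\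
      (forall v, In v (atom_vars b) -> ~ In v (bound_vars a))
  | Ex _ a => hygienic a
  end.

Definition model (V : Type) (F : form S V) (g : V -> U) : config S := {|
  cC := fun C u => exists q v, In (C, q, v) (compatoms F) /\ g v = u;
  cI := fun I t => exists vs, In (I, vs) (intatoms F) /\ map g vs = t;
  cM := fun q u => exists C v, In (C, q, v) (compatoms F) /\ g v = u
|}.

Definition same_config (c1 c2 : config S) : Prop :=
  (forall C u, cC c1 C u <-> cC c2 C u) /\
  (forall I t, cI c1 I t <-> cI c2 I t) /\
  (forall q u, cM c1 q u <-> cM c2 q u).

Definition inj_on_comps (V : Type) (F : form S V) (g : V -> U) : Prop :=
  forall C q v q' v', In (C, q, v) (compatoms F) -> In (C, q', v') (compatoms F) ->
    g v = g v' -> v = v'.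

Definition typed_comps (V : Type) (F : form S V) : Prop :=
  forall C q v, In (C, q, v) (compatoms F) -> scomp q = C.

Definition typed_interactions (V : Type) (F : form S V) : Prop :=
  forall I vs, In (I, vs) (intatoms F) -> length vs = length (iports I) /\
    forall j v p, nth_error vs j = Some v -> nth_error (iports I) j = Some p ->
      exists q, In (pcomp p, q, v) (compatoms F).

Lemma compatoms_atom_vars V (f : form S V) C q v :
  In (C, q, v) (compatoms f) -> In v (atom_vars f).
Proof.
  induction f; simpl; intros H; try tauto.
  - destruct H as [H|[]]; inversion H; auto.
  - apply in_app_or in H; apply in_or_app; tauto.
Qed.

Lemma intatoms_atom_vars V (f : form S V) I vs v :
  In (I, vs) (intatoms f) -> In v vs -> In v (atom_vars f).
Proof.
  induction f; simpl; intros H Hv; try tauto.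
  - destruct H as [H|[]]; inversion H; subst; auto.
  - apply in_app_or in H; apply in_or_app; firstorder.
Qed.

Lemma model_ext V (F : form S V) g g' :
  (forall v, In v (atom_vars F) -> g v = g' v) -> same_config (model F g) (model F g').
Proof.
  intros E. assert (Ec : forall C q v, In (C, q, v) (compatoms F) -> g v = g' v)
    by eauto using compatoms_atom_vars.
  assert (Ei : forall I vs, In (I, vs) (intatoms F) -> map g vs = map g' vs)
    by (intros; apply map_ext_in; eauto using intatoms_atom_vars).
  split; [|split]; simpl; intros.
  - split; intros (q & v & Hv & <-); exists q, v; rewrite (Ec _ _ _ Hv); auto.
  - split; intros (vs & Hv & <-); exists vs; rewrite (Ei _ _ Hv); auto.
  - split; intros (C & v & Hv & <-); exists C, v; rewrite (Ec _ _ _ Hv); auto.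
Qed.

Lemma same_config_trans c1 c2 c3 :
  same_config c1 c2 -> same_config c2 c3 -> same_config c1 c3.
Proof.
  intros (C1 & I1 & M1) (C2 & I2 & M2).
  split; [|split]; intros; [rewrite C1, C2 | rewrite I1, I2 | rewrite M1, M2]; tauto.
Qed.

Lemma union_model_sep V (a b : form S V) g c c1 c2 :
  is_union c c1 c2 -> same_config c1 (model a g) -> same_config c2 (model b g) ->
  same_config c (model (Sep a b) g).
Proof.
  intros (UC & UI & UM) (C1 & I1 & M1) (C2 & I2 & M2).
  split; [|split]; simpl; intros.
  - rewrite UC, C1, C2; simpl. setoid_rewrite in_app_iff. firstorder.
  - rewrite UI, I1, I2; simpl. setoid_rewrite in_app_iff. firstorder.
  - rewrite UM, M1, M2; simpl. setoid_rewrite in_app_iff. firstorder.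
Qed.

Lemma inj_on_comps_sep V (a b : form S V) g :
  inj_on_comps a g -> inj_on_comps b g ->
  (forall C q v q' v', In (C, q, v) (compatoms a) -> In (C, q', v') (compatoms b) ->
     g v <> g v') ->
  inj_on_comps (Sep a b) g.
Proof.
  intros Ia Ib Hab C q v q' v' Hv Hv' E; simpl in Hv, Hv'.
  apply in_app_or in Hv; apply in_app_or in Hv'.
  destruct Hv as [Hv|Hv], Hv' as [Hv'|Hv']; eauto.
  - exfalso; eapply Hab; eauto.
  - exfalso; eapply Hab; eauto.
Qed.

Definition describes (V : Type) (c : config S) (F : form S V) (s g : V -> U) : Prop :=
  (forall v, ~ In v (bound_vars F) -> g v = s v) /\
  same_config c (model F g) /\ inj_on_comps F g.

Lemma describes_sep V (d : forall a b : V, {a = b} + {a <> b}) (s g1 g2 : V -> U)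
  (c c1 c2 : config S) (f g : form S V) :
  disjoint c1 c2 -> is_union c c1 c2 -> hygienic (Sep f g) ->
  describes c1 f s g1 -> describes c2 g s g2 -> exists gg, describes c (Sep f g) s gg.
Proof.
  intros [HdC _] Hun (_ & _ & Hfg & Hgf) (Hs1 & Hc1 & Hi1) (Hs2 & Hc2 & Hi2).
  set (gg := fun v => if in_dec d v (bound_vars f) then g1 v else g2 v).
  assert (E1 : forall v, In v (atom_vars f) -> g1 v = gg v).
  { intros v Hv; unfold gg; destruct (in_dec d v (bound_vars f)); auto.
    rewrite Hs1, Hs2; auto. }
  assert (E2 : forall v, In v (atom_vars g) -> g2 v = gg v).
  { intros v Hv; unfold gg; destruct (in_dec d v (bound_vars f)); auto.
    exfalso; eapply Hgf; eauto. }
  exists gg; split; [|split].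
  - intros v Hv; unfold gg; simpl in Hv; rewrite in_app_iff in Hv.
    destruct (in_dec d v (bound_vars f)); [tauto|auto].
  - apply union_model_sep with c1 c2; auto; eapply same_config_trans; eauto using model_ext.
  - apply inj_on_comps_sep.
    + intros C q v q' v' Hv Hv'. rewrite <- !E1 by eauto using compatoms_atom_vars. eauto.
    + intros C q v q' v' Hv Hv'. rewrite <- !E2 by eauto using compatoms_atom_vars. eauto.
    + intros C q v q' v' Hv Hv' E. apply (HdC C (gg v)); split.
      * apply Hc1; exists q, v; split; auto. apply E1; eauto using compatoms_atom_vars.
      * apply Hc2; exists q', v'; split; auto. rewrite E. apply E2; eauto using compatoms_atom_vars.
Qed.

Lemma sat_describes D V d s c (F : form S V) :
  sat D d s c F -> hygienic F -> exists g, describes c F s g.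
Proof.
  induction 1 as [V d s c (HC & HI & HM) | | V d s c C q x HC HI HM
                 | V d s c I xs HC HI HM | | V d s c c1 c2 f g Hdisj Hun _ IH1 _ IH2
                 | V d s c x f u _ IH]; intros Hok; try contradiction.
  - exists s; split; [auto|split; [|intros ? ? ? ? ? []]].
    split; [|split]; simpl; intros; split; firstorder.
  - exists s; split; [auto|split].
    + split; [|split]; simpl; intros C' u.
      * rewrite HC; split; [intros [-> ->]; eauto|intros (q' & v & [E|[]] & <-); inversion E; auto].
      * split; [intros H; exfalso; eapply HI; eauto|intros (vs & [] & _)].
      * rewrite HM; split; [intros [-> ->]; eauto|intros (C0 & v & [E|[]] & <-); inversion E; auto].
    + intros C0 q0 v q' v' [E|[]] [E'|[]] _; inversion E; inversion E'; congruence.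
  - exists s; split; [auto|split; [|intros ? ? ? ? ? []]].
    split; [|split]; simpl; intros I' t.
    + split; [intros H; exfalso; eapply HC; eauto|intros (q & v & [] & _)].
    + rewrite HI; split; [intros [-> ->]; eauto|intros (vs & [E|[]] & <-); inversion E; auto].
    + split; [intros H; exfalso; eapply HM; eauto|intros (C & v & [] & _)].
  - destruct (IH1 (proj1 Hok)) as [g1 D1], (IH2 (proj1 (proj2 Hok))) as [g2 D2].
    eapply describes_sep; eauto.
  - destruct (IH Hok) as (g & Hs & Hc & Hi). exists g; split; auto.
    intros v Hv; simpl in Hv. rewrite Hs by tauto. unfold upd. destruct (d v x); [subst; tauto|auto].
Qed.

Lemma map_tuple_map V (f : CT S -> U -> U) (g h : V -> U) ports vs :
  length vs = length ports ->
  (forall j v p, nth_error vs j = Some v -> nth_error ports j = Some p ->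
     f (pcomp p) (g v) = h v) ->
  map_tuple f ports (map g vs) = map h vs.
Proof.
  revert vs; induction ports as [|p ports IH]; intros [|v vs] Hl H; try discriminate; auto.
  simpl; f_equal.
  - exact (H 0 v p eq_refl eq_refl).
  - apply IH; [simpl in Hl; lia|]. intros j; exact (H (Datatypes.S j)).
Qed.

Lemma symmetric_same_config_l c c' c'' :
  same_config c c' -> symmetric c' c'' -> symmetric c c''.
Proof.
  intros (HC & HI & HM) (f & Hf & SC & SI & SM). exists f; split; [exact Hf|].
  split; [|split]; intros.
  - rewrite SC; setoid_rewrite HC; tauto.
  - rewrite SI; setoid_rewrite HI; tauto.
  - rewrite SM; setoid_rewrite HM; tauto.
Qed.

Lemma symmetric_models V (F : form S V) g h :
  typed_comps F -> typed_interactions F -> inj_on_comps F g -> inj_on_comps F h ->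
  symmetric (model F g) (model F h).
Proof.
  intros Htc Hti Ig Ih.
  destruct (choice (fun C f => exists f' : U -> U,
      (forall u, f' (f u) = u) /\ (forall u, f (f' u) = u) /\
      (forall a, In a (compatoms F) -> fst (fst a) = C -> f (g (snd a)) = h (snd a))))
    as [f Hf].
  { intros C; apply finite_correspondence_extends.
    intros [[C1 q1] v1] [[C2 q2] v2] H1 H2 E1 E2; simpl in *; subst.
    split; intros E; [rewrite (Ig _ _ _ _ _ H1 H2 E) | rewrite (Ih _ _ _ _ _ H1 H2 E)]; auto. }
  assert (Hfv : forall C q v, In (C, q, v) (compatoms F) -> f C (g v) = h v).
  { intros C q v Hv. destruct (Hf C) as (_ & _ & _ & H). exact (H (C, q, v) Hv eq_refl). }
  assert (Hft : forall I vs, In (I, vs) (intatoms F) ->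
      map_tuple f (iports I) (map g vs) = map h vs).
  { intros I vs Hv; destruct (Hti I vs Hv) as [Hl Hj]; apply map_tuple_map; auto.
    intros j v p Hjv Hp; destruct (Hj j v p Hjv Hp) as [q Hq]; eauto. }
  exists f; split; [intros C; destruct (Hf C) as (f' & K1 & K2 & _); eauto|].
  split; [|split]; simpl; intros.
  - split.
    + intros (q & v & Hv & <-); exists (g v); split; eauto.
    + intros (? & (q & v & Hv & <-) & <-); exists q, v; split; [auto|symmetry; eauto].
  - split.
    + intros (vs & Hv & <-); exists (map g vs); split; eauto.
    + intros (? & (vs & Hv & <-) & <-); exists vs; split; [auto|symmetry; eauto].
  - split.
    + intros (C & v & Hv & <-); exists (g v); split; eauto. rewrite (Htc _ _ _ Hv); eauto.
    + intros (? & (C & v & Hv & <-) & <-); exists C, v; split; [auto|].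
      rewrite (Htc _ _ _ Hv); symmetry; eauto.
Qed.

End Models.

Lemma nth_error_app_length_add (A : Type) (l m : list A) i :
  nth_error (l ++ m) (length l + i) = nth_error m i.
Proof. rewrite nth_error_app2 by lia. f_equal. lia. Qed.

Section Instantiation.
Variable S : sig.
Implicit Types (w : list nat) (F : nat -> list var' -> form S var') (rho : nat -> var').

Lemma inst_sep w F rho (f g : form S nat) k :
  inst w F rho (Sep f g) k =
  (Sep (fst (inst w F rho f k)) (fst (inst w F rho g (snd (inst w F rho f k)))),
   snd (inst w F rho g (snd (inst w F rho f k)))).
Proof.
  simpl. destruct (inst w F rho f k) as [f' k1]. simpl. destruct (inst w F rho g k1). reflexivity.
Qed.

Lemma inst_pconj_collect (X : Type) (col : form S var' -> list X)
  (Hcol : forall a b, col (Sep a b) = col a ++ col b) w F (P : form S nat) :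
  pconj P -> forall rho k,
  snd (inst w F rho P k) = k + length (preds P) /\
  (forall x, In x (col (fst (inst w F rho P k))) <->
     exists i A xs, nth_error (preds P) i = Some (A, xs) /\ In x (col (F (k + i) (map rho xs)))).
Proof.
  induction 1 as [A xs|f g _ IH1 _ IH2]; intros rho k.
  - simpl. split; [lia|]. intros x; split.
    + intros H. exists 0, A, xs. rewrite Nat.add_0_r. auto.
    + intros ([|[|i]] & A' & xs' & Hi & Hx); simpl in Hi; try discriminate.
      inversion Hi; subst. rewrite Nat.add_0_r in Hx. auto.
  - rewrite inst_sep; simpl fst; simpl snd.
    destruct (IH1 rho k) as [E1 H1], (IH2 rho (snd (inst w F rho f k))) as [E2 H2].
    simpl preds. rewrite length_app. split; [rewrite E2, E1; lia|].
    intros x. rewrite Hcol, in_app_iff, H1, H2, E1. split.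
    + intros [(i & A & xs & Hi & Hx)|(i & A & xs & Hi & Hx)].
      * exists i, A, xs. rewrite nth_error_app1 by (apply nth_error_Some; congruence). auto.
      * exists (length (preds f) + i), A, xs.
        rewrite nth_error_app_length_add, Nat.add_assoc. auto.
    + intros (i & A & xs & Hi & Hx).
      destruct (Nat.lt_ge_cases i (length (preds f))).
      * left. exists i, A, xs. rewrite nth_error_app1 in Hi; auto.
      * right. exists (i - length (preds f)), A, xs.
        rewrite nth_error_app2 in Hi by lia. split; auto.
        replace (k + length (preds f) + (i - length (preds f))) with (k + i) by lia. auto.
Qed.

Lemma inst_pconj_hygienic w F (P : form S nat) : pconj P -> forall rho k,
  (forall i A xs, nth_error (preds P) i = Some (A, xs) -> hygienic (F (k + i) (map rho xs))) ->
  (forall i A xs i' A' xs' v, i <> i' -> nth_error (preds P) i = Some (A, xs) ->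
     nth_error (preds P) i' = Some (A', xs') -> In v (atom_vars (F (k + i) (map rho xs))) ->
     ~ In v (bound_vars (F (k + i') (map rho xs')))) ->
  hygienic (fst (inst w F rho P k)).
Proof.
  induction 1 as [A xs|f g Hf IH1 Hg IH2]; intros rho k Hok Hd.
  - simpl. specialize (Hok 0 A xs eq_refl). rewrite Nat.add_0_r in Hok. auto.
  - rewrite inst_sep. simpl fst.
    destruct (@inst_pconj_collect _ (@atom_vars S var') (fun a b => eq_refl) w F f Hf rho k) as [E1 A1].
    destruct (@inst_pconj_collect _ (@bound_vars S var') (fun a b => eq_refl) w F f Hf rho k) as [_ B1].
    destruct (@inst_pconj_collect _ (@atom_vars S var') (fun a b => eq_refl) w F g Hg rho
                (snd (inst w F rho f k))) as [_ A2].
    destruct (@inst_pconj_collect _ (@bound_vars S var') (fun a b => eq_refl) w F g Hg rho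
                (snd (inst w F rho f k))) as [_ B2].
    rewrite E1 in A2, B2 |- *. simpl preds in Hok, Hd.
    assert (L1 : forall i A xs, nth_error (preds f) i = Some (A, xs) ->
              nth_error (preds f ++ preds g) i = Some (A, xs)).
    { intros i A xs H. rewrite nth_error_app1; auto. apply nth_error_Some; congruence. }
    assert (L2 : forall i A xs, nth_error (preds g) i = Some (A, xs) ->
              nth_error (preds f ++ preds g) (length (preds f) + i) = Some (A, xs)).
    { intros i A xs H. rewrite nth_error_app_length_add. auto. }
    assert (Ri : forall i, k + length (preds f) + i = k + (length (preds f) + i)) by (intros; lia).
    assert (Lt : forall i A xs, nth_error (preds f) i = Some (A, xs) -> i < length (preds f))
      by (intros; apply nth_error_Some; congruence).
    split; [|split; [|split]].
    + apply IH1; eauto.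
    + apply IH2.
      * intros i A xs H. rewrite Ri. eauto.
      * intros i A xs i' A' xs' v Hne H H'. rewrite !Ri. eapply Hd; eauto. lia.
    + intros v (i & A & xs & Hi & Hv)%A1 (i' & A' & xs' & Hi' & Hb)%B2.
      rewrite Ri in Hb. eapply Hd; [| | |exact Hv|exact Hb]; eauto.
      specialize (Lt _ _ _ Hi). lia.
    + intros v (i & A & xs & Hi & Hv)%A2 (i' & A' & xs' & Hi' & Hb)%B1.
      rewrite Ri in Hv. eapply Hd; [| | |exact Hv|exact Hb]; eauto.
      specialize (Lt _ _ _ Hi'). lia.
Qed.

Lemma inst_iconj w F (psi : form S nat) : iconj psi -> forall rho k,
  snd (inst w F rho psi k) = k /\ compatoms (fst (inst w F rho psi k)) = [] /\
  bound_vars (fst (inst w F rho psi k)) = [] /\ hygienic (fst (inst w F rho psi k)) /\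
  (forall a, In a (intatoms (fst (inst w F rho psi k))) <->
     exists I xs, In (I, xs) (intatoms psi) /\ a = (I, map rho xs)) /\
  (forall v, In v (atom_vars (fst (inst w F rho psi k))) -> exists x, v = rho x).
Proof.
  induction 1 as [|I xs|f g _ IH1 _ IH2]; intros rho k.
  - simpl. repeat split; auto; try tauto. intros (I & xs & [] & _).
  - simpl. repeat split; auto.
    + intros [<-|[]]. eauto.
    + intros (I' & xs' & [E|[]] & ->). inversion E; auto.
    + intros v (x & <- & _)%in_map_iff; eauto.
  - rewrite inst_sep. simpl fst; simpl snd.
    destruct (IH1 rho k) as (E1 & C1 & B1 & O1 & I1 & V1). rewrite E1.
    destruct (IH2 rho k) as (E2 & C2 & B2 & O2 & I2 & V2).
    simpl. rewrite C1, C2, B1, B2. repeat split; auto.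
    + intros [Ha|Ha]%in_app_or; [apply I1 in Ha|apply I2 in Ha];
        destruct Ha as (I & xs & ? & ?); exists I, xs; rewrite in_app_iff; auto.
    + intros (I & xs & [Hin|Hin]%in_app_or & ->); apply in_or_app;
        [left; apply I1|right; apply I2]; eauto.
    + intros v [Hv|Hv]%in_app_or; eauto.
Qed.

Fixpoint exsV (w : list nat) (ys : list nat) (f : form S var') : form S var' :=
  match ys with [] => f | y :: ys' => Ex (inr (w, y)) (exsV w ys' f) end.

Definition bind_at (w : list nat) (ys : list nat) (rho : nat -> var') : nat -> var' :=
  fun v => if in_dec Nat.eq_dec v ys then inr (w, v) else rho v.

Lemma inst_exs w F ys (X : form S nat) : forall rho k,
  inst w F rho (exs ys X) k =
  (exsV w ys (fst (inst w F (bind_at w ys rho) X k)), snd (inst w F (bind_at w ys rho) X k)).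
Proof.
  induction ys as [|y ys IH]; intros rho k.
  - simpl. unfold bind_at. simpl. destruct (inst w F rho X k); reflexivity.
  - simpl exs. simpl inst. rewrite IH. simpl.
    replace (bind_at w ys (fun v => if Nat.eq_dec v y then inr (w, y) else rho v))
      with (bind_at w (y :: ys) rho); [reflexivity|].
    apply functional_extensionality. intros v. unfold bind_at. simpl.
    destruct (Nat.eq_dec y v), (in_dec Nat.eq_dec v ys), (Nat.eq_dec v y); subst; congruence.
Qed.

Lemma compatoms_exsV w ys f : compatoms (exsV w ys f) = compatoms f.
Proof. induction ys; simpl; auto. Qed.
Lemma intatoms_exsV w ys f : intatoms (exsV w ys f) = intatoms f.
Proof. induction ys; simpl; auto. Qed.
Lemma atom_vars_exsV w ys f : atom_vars (exsV w ys f) = atom_vars f.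
Proof. induction ys; simpl; auto. Qed.
Lemma bound_vars_exsV w ys f :
  bound_vars (exsV w ys f) = map (fun y => inr (w, y)) ys ++ bound_vars f.
Proof. induction ys; simpl; f_equal; auto. Qed.
Lemma hygienic_exsV w ys f : hygienic (exsV w ys f) <-> hygienic f.
Proof. induction ys; simpl; tauto. Qed.

Lemma preds_exs ys (X : form S nat) : preds (exs ys X) = preds X.
Proof. induction ys; simpl; auto. Qed.
Lemma compatoms_exs ys (X : form S nat) : compatoms (exs ys X) = compatoms X.
Proof. induction ys; simpl; auto. Qed.
Lemma intatoms_exs ys (X : form S nat) : intatoms (exs ys X) = intatoms X.
Proof. induction ys; simpl; auto. Qed.
Lemma compvars_exs ys (X : form S nat) : compvars (exs ys X) = compvars X.
Proof. induction ys; simpl; auto. Qed.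
Lemma fv_exs ys (X : form S nat) v : In v (fv (exs ys X)) -> ~ In v ys.
Proof.
  induction ys; simpl; intros H; auto.
  apply in_remove in H. destruct H as [H1 H2]. intros [E|E]; [congruence|]. apply IHys; auto.
Qed.

Lemma iconj_atoms (psi : form S nat) :
  iconj psi -> preds psi = [] /\ compatoms psi = [] /\ compvars psi = [].
Proof.
  induction 1 as [| |f g _ IH1 _ IH2]; simpl; auto.
  destruct IH1 as (-> & -> & ->), IH2 as (-> & -> & ->); auto.
Qed.

Lemma pconj_atoms (P : form S nat) :
  pconj P -> compatoms P = [] /\ compvars P = [] /\ intatoms P = [].
Proof.
  induction 1 as [|f g _ IH1 _ IH2]; simpl; auto.
  destruct IH1 as (-> & -> & ->), IH2 as (-> & -> & ->); auto.
Qed.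

End Instantiation.

Section Trees.
Variable S : sig.

Definition child_store (ps : list nat) (w : list nat) (k : nat) (args : list var') : nat -> var' :=
  fun z => match lookup z ps args with Some v => v | None => inr (w ++ [Datatypes.S k], z) end.

Definition child_formula (ch : list (rtree S)) (w : list nat) : nat -> list var' -> form S var' :=
  fun k args =>
    match nth_error (map (fun c => (rparams (label c), chi c)) ch) k with
    | Some (ps, g) => g (w ++ [Datatypes.S k]) (child_store ps w k args)
    | None => Emp
    end.

Definition node_renaming (r : rule S) (w : list nat) (sigma : nat -> var') : nat -> var' :=
  fun v => if in_dec Nat.eq_dec v (rparams r) then sigma v else inr (w, v).

Lemma chi_Node r ch w sigma :
  chi (Node r ch) w sigma = fst (inst w (child_formula ch w) (node_renaming r w sigma) (rbody r) 0).
Proof. reflexivity. Qed.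

Lemma child_formula_nth ch w k c args : nth_error ch k = Some c ->
  child_formula ch w k args =
  chi c (w ++ [Datatypes.S k]) (child_store (rparams (label c)) w k args).
Proof. intros H. unfold child_formula. rewrite nth_error_map, H. reflexivity. Qed.

Lemma seps_Node r ch x :
  seps (Node r ch) x =
  if in_dec Nat.eq_dec x (compvars (rbody r)) then []
  else match find_arg x (preds (rbody r)) with
       | Some (i, j) => match nth_error ch i with
                        | Some c => Datatypes.S i :: seps c (nth j (rparams (@label S c)) 0)
                        | None => [] end
       | None => [] end.
Proof.
  simpl. destruct (in_dec Nat.eq_dec x (compvars (rbody r))); auto.
  destruct (find_arg x (preds (rbody r))) as [[i j]|]; auto.
  rewrite nth_error_map. destruct (nth_error ch i); reflexivity.
Qed.

Lemma lookup_nth (ps : list nat) (args : list var') : NoDup ps -> length args = length ps ->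
  forall j z, nth_error ps j = Some z -> lookup z ps args = nth_error args j.
Proof.
  revert args. induction ps as [|p ps IH]; intros [|a args] Hnd Hl [|j] z Hj; try discriminate.
  - inversion Hj; subst. simpl. destruct (Nat.eq_dec z z); congruence.
  - inversion Hnd; subst. simpl in Hj |- *. destruct (Nat.eq_dec z p) as [->|].
    + exfalso. eauto using nth_error_In.
    + apply IH; auto.
Qed.

Lemma index_of_nth (xs : list nat) : NoDup xs ->
  forall j x, nth_error xs j = Some x -> index_of x xs = j.
Proof.
  induction xs as [|y xs IH]; intros Hnd [|j] x Hj; try discriminate; simpl in Hj |- *.
  - inversion Hj; subst. destruct (Nat.eq_dec x x); congruence.
  - inversion Hnd; subst. destruct (Nat.eq_dec x y) as [->|].
    + exfalso. eauto using nth_error_In.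
    + f_equal. apply IH; auto.
Qed.

Lemma NoDup_app_disjoint (A : Type) (l1 l2 : list A) a :
  NoDup (l1 ++ l2) -> In a l1 -> In a l2 -> False.
Proof.
  induction l1 as [|b l1 IH]; simpl; intros H H1 H2; auto.
  inversion H as [|b' l' Hn Hnd]; subst. destruct H1 as [<-|H1]; eauto.
  apply Hn, in_or_app; auto.
Qed.

Lemma find_arg_nth (l : list (Pred S * list nat)) : NoDup (concat (map snd l)) ->
  forall i A xs j x, nth_error l i = Some (A, xs) -> nth_error xs j = Some x ->
  find_arg x l = Some (i, j).
Proof.
  induction l as [|[B ys] l IH]; intros Hnd [|i] A xs j x Hi Hj; try discriminate;
    simpl in Hnd, Hi |- *.
  - inversion Hi; subst. destruct (in_dec Nat.eq_dec x xs) as [_|n].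
    + do 2 f_equal. eapply index_of_nth; eauto. eapply NoDup_app_remove_r; eauto.
    + exfalso. eauto using nth_error_In.
  - destruct (in_dec Nat.eq_dec x ys) as [Hin|_].
    + exfalso. apply (NoDup_app_disjoint Hnd Hin).
      apply in_concat. exists xs. split; [apply in_map_iff; exists (A, xs)|]; eauto using nth_error_In.
    + rewrite (IH (NoDup_app_remove_l _ _ Hnd) _ _ _ _ _ Hi Hj). auto.
Qed.

Lemma subtree_app (T : rtree S) w w' t :
  subtree T w = Some t -> subtree T (w ++ w') = subtree t w'.
Proof.
  revert T. induction w as [|[|a] w IH]; intros [r ch] H; simpl in H |- *; try discriminate.
  - inversion H; subst. reflexivity.
  - destruct (nth_error ch a); [apply IH; auto|discriminate].
Qed.

Fixpoint rtree_nested_ind (P : rtree S -> Prop)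
  (H : forall r ch, (forall c, In c ch -> P c) -> P (Node r ch)) (t : rtree S) : P t :=
  match t with
  | Node r ch => H r ch ((fix go (l : list (rtree S)) : forall c, In c l -> P c :=
       match l as l0 return forall c, In c l0 -> P c with
       | [] => fun c Hc => False_ind _ Hc
       | c' :: l' => fun c Hc => match Hc with
                                 | or_introl e => eq_ind c' P (rtree_nested_ind H c') c e
                                 | or_intror h => go l' c h end
       end) ch)
  end.

End Trees.

Definition quantified_below (w : list nat) (v : var') : Prop :=
  exists i p y, v = inr (w ++ i :: p, y).
Definition quantified_within (w : list nat) (v : var') : Prop :=
  exists p y, v = inr (w ++ p, y).

Lemma child_position_neq (w p : list nat) i : (w ++ [i]) ++ p <> w.
Proof. intros E. apply (f_equal (@length nat)) in E. rewrite !length_app in E. simpl in E. lia. Qed.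

Lemma child_positions_inj (w p p' : list nat) i i' : (w ++ [i]) ++ p = (w ++ [i']) ++ p' -> i = i'.
Proof. rewrite <- !app_assoc. intros E. apply app_inv_head in E. simpl in E. congruence. Qed.

Lemma quantified_below_child w i v : quantified_below (w ++ [i]) v -> quantified_below w v.
Proof. intros (i' & p & y & ->). exists i, (i' :: p), y. rewrite <- app_assoc. reflexivity. Qed.

Lemma quantified_within_child_below w i v : quantified_within (w ++ [i]) v -> quantified_below w v.
Proof. intros (p & y & ->). exists i, p, y. rewrite <- app_assoc. reflexivity. Qed.

Lemma quantified_within_child w i v : quantified_within (w ++ [i]) v -> quantified_within w v.
Proof. intros (p & y & ->). exists (i :: p), y. rewrite <- app_assoc. reflexivity. Qed.

Lemma not_quantified_below_self w y : ~ quantified_below w (inr (w, y)).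
Proof.
  intros (i & p & y' & E). injection E as E _. symmetry in E.
  apply (@child_position_neq w p i). rewrite <- app_assoc. exact E.
Qed.

Lemma quantified_within_children w i i' v :
  quantified_within (w ++ [i]) v -> quantified_within (w ++ [i']) v -> i = i'.
Proof. intros (p & y & ->) (p' & y' & E). injection E as E _. eapply child_positions_inj; eauto. Qed.

Section Invariant.
Variables (S : sig) (D : list (rule S)) (lam : profile S) (T : rtree S).
Hypothesis HwfD : wf_SID D.
Hypothesis HtD : tight_SID D lam.
Hypothesis Hforms : forall r, In r D -> form_I r \/ form_II r.

(* Strong enough to go through the induction on the tree: the position fields
   make the atom variables of distinct subtrees disjoint from each other's
   bound variables, which gives hygiene and injectivity at the parent. *)
Record node_invariant (t : rtree S) (w : list nat) (sigma : nat -> var') : Prop := {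
  inv_hygienic : hygienic (chi t w sigma);
  inv_typed_comps : typed_comps (chi t w sigma);
  inv_comps_within : forall C q v,
    In (C, q, v) (compatoms (chi t w sigma)) -> exists p, sT T v = w ++ p;
  inv_inj : inj_on_comps (chi t w sigma) (sT T);
  inv_typed_interactions : typed_interactions (chi t w sigma);
  inv_profile : forall l z C, nth_error (rparams (label t)) l = Some z ->
    nth_error (lam (rhead (label t))) l = Some C ->
    exists q, In (C, q, sigma z) (compatoms (chi t w sigma));
  inv_atom_vars : forall v, In v (atom_vars (chi t w sigma)) ->
    (exists x, In x (rparams (label t)) /\ v = sigma x) \/ quantified_within w v;
  inv_bound_vars : forall v, In v (bound_vars (chi t w sigma)) -> quantified_within w v
}.

(* [w ++ seps t x] is the canonical value of parameter [x] of the node [t] at [w]. *)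
Definition placed (t : rtree S) (w : list nat) (sigma : nat -> var') : Prop :=
  subtree T w = Some t /\
  (forall x, In x (rparams (label t)) -> sT T (sigma x) = w ++ seps t x) /\
  (forall x, In x (rparams (label t)) -> ~ quantified_below w (sigma x)).

Lemma node_invariant_form_I r w sigma :
  In r D -> form_I r -> placed (Node r []) w sigma -> node_invariant (Node r []) w sigma.
Proof.
  intros Hr (C & q & x & Hp & Hb & Hs) (_ & Hsig & _); simpl label in Hsig.
  assert (Hx : In x (rparams r)) by (rewrite Hp; simpl; auto).
  assert (Ec : chi (Node r []) w sigma = CompQ C q (sigma x)).
  { rewrite chi_Node, Hb. unfold node_renaming. simpl.
    destruct (in_dec Nat.eq_dec x (rparams r)); tauto. }
  constructor; rewrite Ec; simpl.
  - auto.
  - intros C0 q0 v [E|[]]. inversion E; subst; auto.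
  - intros C0 q0 v [E|[]]. inversion E; subst. rewrite Hsig by auto. eauto.
  - intros C0 q0 v q1 v1 [E|[]] [E1|[]] _. inversion E; inversion E1; subst; auto.
  - intros I vs [].
  - intros l z C1 Hl HC. destruct HtD as (_ & _ & HtP).
    destruct (HtP r l z Hr Hl) as (C2 & HC2 & [(q2 & Hq2)|(B & ys & l' & HB & _)]);
      rewrite Hb in *; simpl in *; [|contradiction].
    destruct Hq2 as [E|[]]. inversion E; subst.
    rewrite Hp in Hl. destruct l as [|[|l]]; simpl in Hl; inversion Hl; subst. rewrite HC in HC2.
    inversion HC2; subst. eauto.
  - intros v [<-|[]]. eauto.
  - intros v [].
Qed.

Section FormII.
Variables (r : rule S) (ch : list (rtree S)) (w : list nat) (sigma : nat -> var').
Variables (ys : list nat) (ph ps P : form S nat).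
Hypothesis Hr : In r D.
Hypothesis Hlen : length ch = length (preds (rbody r)).
Hypothesis Hhead : forall i t A xs, nth_error ch i = Some t ->
  nth_error (preds (rbody r)) i = Some (A, xs) -> rhead (label t) = A.
Hypothesis Hch : forall t, In t ch -> rtree_ok D t.
Hypothesis IH : forall c, In c ch -> forall w' sigma', placed c w' sigma' -> node_invariant c w' sigma'.
Hypothesis Hplaced : placed (Node r ch) w sigma.
Hypothesis Hbody : rbody r = exs ys (Sep ph (Sep ps P)).
Hypothesis Hph : ph = Emp \/
  exists C q x1 rest, rparams r = x1 :: rest /\ ph = CompQ C q x1 /\ scomp q = C.
Hypothesis Hps : iconj ps.
Hypothesis HP : pconj P.
Hypothesis Hnd : NoDup (pargs P).
Hypothesis Hpargs : forall v, In v (pargs P) <->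
  ((In v (rparams r) /\ ~ In v (fv ph)) \/ In v ys).

Let rho := bind_at w ys (node_renaming r w sigma).
Let G := child_formula ch w.
Let ph' := fst (inst w G rho ph 0).
Let ps' := fst (inst w G rho ps 0).
Let P' := fst (inst w G rho P 0).
Let child_sigma (c : rtree S) i xs := child_store (rparams (label c)) w i (map rho xs).

Lemma param_not_quantified v : In v (rparams r) -> ~ In v ys.
Proof.
  destruct HwfD as (Hwf & _). intros Hv. apply (proj1 (proj2 (Hwf r Hr))) in Hv.
  rewrite Hbody in Hv. eapply fv_exs; eauto.
Qed.

Lemma rho_param v : In v (rparams r) -> rho v = sigma v.
Proof.
  intros Hv. unfold rho, bind_at, node_renaming.
  destruct (in_dec Nat.eq_dec v ys); [exfalso; eapply param_not_quantified; eauto|].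
  destruct (in_dec Nat.eq_dec v (rparams r)); tauto.
Qed.

Lemma rho_value v : sT T (rho v) = w ++ seps (Node r ch) v.
Proof.
  destruct Hplaced as (Hsub & Hsig & _).
  unfold rho, bind_at, node_renaming.
  destruct (in_dec Nat.eq_dec v ys); [simpl; rewrite Hsub; auto|].
  destruct (in_dec Nat.eq_dec v (rparams r)); [auto|simpl; rewrite Hsub; auto].
Qed.

Lemma rho_not_below v : ~ quantified_below w (rho v).
Proof.
  destruct Hplaced as (_ & _ & Hnb).
  unfold rho, bind_at, node_renaming.
  destruct (in_dec Nat.eq_dec v ys); [apply not_quantified_below_self|].
  destruct (in_dec Nat.eq_dec v (rparams r)); [auto|apply not_quantified_below_self].
Qed.

Lemma rho_cases v :
  (exists x, In x (rparams r) /\ rho v = sigma x) \/ quantified_within w (rho v).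
Proof.
  destruct (in_dec Nat.eq_dec v (rparams r)) as [Hv|Hv].
  - left. exists v. auto using rho_param.
  - right. unfold rho, bind_at, node_renaming.
    destruct (in_dec Nat.eq_dec v ys); [|destruct (in_dec Nat.eq_dec v (rparams r)); [tauto|]];
      exists [], v; rewrite app_nil_r; auto.
Qed.

Lemma body_atoms :
  preds (rbody r) = preds P /\ compatoms (rbody r) = compatoms ph /\
  compvars (rbody r) = compvars ph /\ intatoms (rbody r) = intatoms ps.
Proof.
  destruct (iconj_atoms Hps) as (Pp & Cp & CVp), (pconj_atoms HP) as (CP & CVP & IP).
  rewrite Hbody, preds_exs, compatoms_exs, compvars_exs, intatoms_exs. simpl.
  rewrite Pp, Cp, CVp, CP, CVP, IP.
  destruct Hph as [->|(C & q & x1 & rest & _ & -> & _)]; simpl; rewrite ?app_nil_r; auto.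
Qed.

Lemma head_inst_shape :
  snd (inst w G rho ph 0) = 0 /\ hygienic ph' /\ bound_vars ph' = [] /\ intatoms ph' = [] /\
  (forall v, In v (atom_vars ph') -> exists x, v = rho x).
Proof.
  unfold ph'. destruct Hph as [->|(C & q & x1 & rest & _ & -> & _)]; simpl.
  - repeat split; tauto.
  - repeat split. intros v [<-|[]]. eauto.
Qed.

Lemma head_inst_compatoms a :
  In a (compatoms ph') <-> exists C q x, In (C, q, x) (compatoms ph) /\ a = (C, q, rho x).
Proof.
  unfold ph'. destruct Hph as [->|(C & q & x1 & rest & _ & -> & _)]; simpl.
  - firstorder.
  - split; [intros [<-|[]]; exists C, q, x1; auto|].
    intros (C0 & q0 & x & [E|[]] & ->). inversion E; auto.
Qed.

Lemma head_compatoms_unique C q x C' q' x' :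
  In (C, q, x) (compatoms ph) -> In (C', q', x') (compatoms ph) -> x = x'.
Proof.
  destruct Hph as [->|(C0 & q0 & x1 & rest & _ & -> & _)]; simpl; [tauto|].
  intros [E|[]] [E'|[]]. inversion E; inversion E'; congruence.
Qed.

Lemma chi_form_II : chi (Node r ch) w sigma = exsV w ys (Sep ph' (Sep ps' P')).
Proof.
  destruct head_inst_shape as (Sph & _), (inst_iconj w G Hps rho 0) as (Sps & _).
  rewrite chi_Node, Hbody, inst_exs. fold G rho. simpl fst at 1. f_equal.
  unfold ph', ps', P'. revert Sph Sps.
  destruct (inst w G rho ph 0) as [a0 n0]; simpl; intros ->.
  destruct (inst w G rho ps 0) as [a1 n1]; simpl; intros ->.
  destruct (inst w G rho P 0); reflexivity.
Qed.

Lemma head_value C q x : In (C, q, x) (compatoms ph) -> sT T (rho x) = w.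
Proof.
  intros Hx. rewrite rho_value, seps_Node, (proj1 (proj2 (proj2 body_atoms))).
  destruct (in_dec Nat.eq_dec x (compvars ph)) as [_|n]; [apply app_nil_r|].
  exfalso. apply n. destruct Hph as [->|(C0 & q0 & x1 & rest & _ & -> & _)]; [destruct Hx|].
  destruct Hx as [E|[]]; inversion E; subst; simpl; auto.
Qed.

Lemma pred_arg_not_head x : In x (pargs P) -> ~ In x (compvars ph).
Proof.
  pose proof param_not_quantified as Hnq.
  intros Hx Hc. destruct Hph as [->|(C & q & x1 & rest & Hp & -> & _)]; [destruct Hc|].
  destruct Hc as [<-|[]]. apply Hpargs in Hx. destruct Hx as [[_ Hn]|Hy].
  - apply Hn. simpl; auto.
  - apply (Hnq x1); auto. rewrite Hp; simpl; auto.
Qed.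

Lemma child_exists i A xs : nth_error (preds P) i = Some (A, xs) -> exists c, nth_error ch i = Some c.
Proof.
  intros Hi. destruct (nth_error ch i) as [c|] eqn:Hc; eauto.
  apply nth_error_None in Hc. rewrite Hlen, (proj1 body_atoms) in Hc.
  assert (i < length (preds P)) by (apply nth_error_Some; congruence). lia.
Qed.

Lemma child_rule c i : nth_error ch i = Some c -> In (label c) D.
Proof. intros Hc. destruct (Hch (nth_error_In _ _ Hc)); auto. Qed.

Lemma child_args i A xs c :
  nth_error (preds P) i = Some (A, xs) -> nth_error ch i = Some c ->
  length xs = length (rparams (label c)) /\
  forall j z, nth_error (rparams (label c)) j = Some z ->
    exists x, nth_error xs j = Some x /\ child_sigma c i xs z = rho x.
Proof.
  intros Hi Hc. destruct HwfD as (Hwf & HwfL).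
  assert (Hl : length xs = length (rparams (label c))).
  { apply (HwfL r (label c) A xs Hr (child_rule Hc)); [|eapply Hhead; eauto].
    rewrite (proj1 body_atoms). eapply nth_error_In; eauto.
    rewrite (proj1 body_atoms); eauto. }
  split; [exact Hl|]. intros j z Hj.
  destruct (nth_error xs j) as [x|] eqn:Hxj.
  - exists x. split; auto. unfold child_sigma, child_store.
    erewrite lookup_nth; [|exact (proj1 (Hwf _ (child_rule Hc)))|rewrite length_map; auto|exact Hj].
    rewrite nth_error_map, Hxj. reflexivity.
  - exfalso. apply nth_error_None in Hxj.
    assert (j < length (rparams (label c))) by (apply nth_error_Some; congruence). lia.
Qed.

Lemma child_placed i A xs c :
  nth_error (preds P) i = Some (A, xs) -> nth_error ch i = Some c ->
  placed c (w ++ [Datatypes.S i]) (child_sigma c i xs).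
Proof.
  intros Hi Hc. destruct (child_args Hi Hc) as [_ Hlk]. destruct Hplaced as (Hsub & _).
  split; [|split]; intros.
  - rewrite (subtree_app _ Hsub). simpl. rewrite Hc. reflexivity.
  - destruct (In_nth_error _ _ H) as [j Hj]. destruct (Hlk j x Hj) as (z & Hzj & ->).
    assert (Hz : In z (pargs P)).
    { apply in_concat. exists xs. split; [apply in_map_iff; exists (A, xs)|];
        eauto using nth_error_In. }
    rewrite rho_value, seps_Node, (proj1 (proj2 (proj2 body_atoms))), (proj1 body_atoms).
    destruct (in_dec Nat.eq_dec z (compvars ph)) as [Hin|_]; [exfalso; eapply pred_arg_not_head; eauto|].
    rewrite (find_arg_nth Hnd Hi Hzj), Hc, (nth_error_nth _ _ _ Hj), <- app_assoc. reflexivity.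
  - destruct (In_nth_error _ _ H) as [j Hj]. destruct (Hlk j x Hj) as (z & _ & ->).
    intros Hb. eapply rho_not_below, quantified_below_child; eauto.
Qed.

Lemma child_invariant i A xs c :
  nth_error (preds P) i = Some (A, xs) -> nth_error ch i = Some c ->
  node_invariant c (w ++ [Datatypes.S i]) (child_sigma c i xs).
Proof. intros Hi Hc. apply IH; [eapply nth_error_In; eauto|eapply child_placed; eauto]. Qed.

Lemma preds_inst_collect (X : Type) (col : form S var' -> list X) :
  (forall a b, col (Sep a b) = col a ++ col b) -> forall x,
  In x (col P') <-> exists i A xs c, nth_error (preds P) i = Some (A, xs) /\
    nth_error ch i = Some c /\ In x (col (chi c (w ++ [Datatypes.S i]) (child_sigma c i xs))).
Proof.
  intros Hcol x. unfold P'. rewrite (proj2 (@inst_pconj_collect S _ col Hcol w G P HP rho 0) x).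
  split.
  - intros (i & A & xs & Hi & Hx). destruct (child_exists Hi) as [c Hc].
    exists i, A, xs, c. unfold G in Hx. rewrite child_formula_nth with (c := c) in Hx; auto.
  - intros (i & A & xs & c & Hi & Hc & Hx). exists i, A, xs. split; auto.
    unfold G. rewrite child_formula_nth with (c := c); auto.
Qed.

Lemma child_atom_vars i A xs c v :
  nth_error (preds P) i = Some (A, xs) -> nth_error ch i = Some c ->
  In v (atom_vars (chi c (w ++ [Datatypes.S i]) (child_sigma c i xs))) ->
  (exists x, v = rho x) \/ quantified_within (w ++ [Datatypes.S i]) v.
Proof.
  intros Hi Hc Hv. destruct (inv_atom_vars (child_invariant Hi Hc) Hv) as [(z & Hz & ->)|]; auto.
  left. destruct (In_nth_error _ _ Hz) as [j Hj].
  destruct (proj2 (child_args Hi Hc) j z Hj) as (x & _ & E). eauto.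
Qed.

Lemma preds_inst_atom_vars v : In v (atom_vars P') ->
  (exists x, v = rho x) \/ exists i, quantified_within (w ++ [Datatypes.S i]) v.
Proof.
  intros (i & A & xs & c & Hi & Hc & Hv)
    %(@preds_inst_collect _ (@atom_vars S var') (fun _ _ => eq_refl) _).
  destruct (child_atom_vars Hi Hc Hv); eauto.
Qed.

Lemma preds_inst_bound_vars v : In v (bound_vars P') ->
  exists i, quantified_within (w ++ [Datatypes.S i]) v.
Proof.
  intros (i & A & xs & c & Hi & Hc & Hv)
    %(@preds_inst_collect _ (@bound_vars S var') (fun _ _ => eq_refl) _).
  exists i. exact (inv_bound_vars (child_invariant Hi Hc) Hv).
Qed.

(* Tightness of the rule at a predicate argument is discharged by the profile
   field of the child's invariant. *)
Lemma pred_arg_comp A xs l x C : In (A, xs) (preds P) -> nth_error xs l = Some x ->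
  nth_error (lam A) l = Some C -> exists q, In (C, q, rho x) (compatoms P').
Proof.
  intros HA Hl HC. destruct (In_nth_error _ _ HA) as [i Hi]. destruct (child_exists Hi) as [c Hc].
  destruct (child_args Hi Hc) as [Hlen' Hlk].
  destruct (nth_error (rparams (label c)) l) as [z|] eqn:Hz.
  2:{ exfalso. apply nth_error_None in Hz.
       assert (l < length xs) by (apply nth_error_Some; congruence). lia. }
  destruct (Hlk l z Hz) as (x' & Hx' & Ez). rewrite Hl in Hx'. injection Hx' as <-.
  assert (Hh : rhead (label c) = A) by (eapply Hhead; [exact Hc|rewrite (proj1 body_atoms); exact Hi]).
  rewrite <- Hh in HC. destruct (inv_profile (child_invariant Hi Hc) Hz HC) as [q Hq].
  exists q. apply (@preds_inst_collect _ (@compatoms S var') (fun _ _ => eq_refl) _).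
  exists i, A, xs, c. unfold child_sigma in Ez. rewrite <- Ez. auto.
Qed.

Lemma chi_form_II_atoms :
  compatoms (chi (Node r ch) w sigma) = compatoms ph' ++ compatoms P' /\
  intatoms (chi (Node r ch) w sigma) = intatoms ps' ++ intatoms P' /\
  atom_vars (chi (Node r ch) w sigma) = atom_vars ph' ++ atom_vars ps' ++ atom_vars P' /\
  bound_vars (chi (Node r ch) w sigma) = map (fun y => inr (w, y)) ys ++ bound_vars P'.
Proof.
  destruct head_inst_shape as (_ & _ & Bph & Iph & _), (inst_iconj w G Hps rho 0) as (_ & Cps & Bps & _).
  rewrite chi_form_II, compatoms_exsV, intatoms_exsV, atom_vars_exsV, bound_vars_exsV.
  cbn [compatoms intatoms atom_vars bound_vars]. fold ps' in Cps, Bps. rewrite Cps, Iph, Bph, Bps. auto.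
Qed.

Lemma child_compatoms_in_preds_inst i A xs c a :
  nth_error (preds P) i = Some (A, xs) -> nth_error ch i = Some c ->
  In a (compatoms (chi c (w ++ [Datatypes.S i]) (child_sigma c i xs))) -> In a (compatoms P').
Proof.
  intros Hi Hc Ha. apply (@preds_inst_collect _ (@compatoms S var') (fun _ _ => eq_refl) _).
  exists i, A, xs, c. auto.
Qed.

Lemma form_II_hygienic : hygienic (chi (Node r ch) w sigma).
Proof.
  destruct head_inst_shape as (_ & Oph & Bph & _ & Aph).
  destruct (inst_iconj w G Hps rho 0) as (_ & _ & Bps & Ops & _ & Aps).
  assert (Hfar : forall x i, ~ quantified_within (w ++ [Datatypes.S i]) (rho x))
    by (intros x i H; eapply rho_not_below, quantified_within_child_below; eauto).
  fold ps' in Bps, Ops, Aps.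
  rewrite chi_form_II, hygienic_exsV. cbn [hygienic bound_vars atom_vars]. rewrite Bph, Bps.
  split; [auto|split; [split; [auto|split; [|split]]|split]]; try (intros v _ []).
  - unfold P'. apply inst_pconj_hygienic; auto.
    + intros i A xs Hi. destruct (child_exists Hi) as [c Hc]. unfold G.
      rewrite child_formula_nth with (c := c) by auto. exact (inv_hygienic (child_invariant Hi Hc)).
    + intros i A xs i' A' xs' v Hne Hi Hi' Hv Hb.
      destruct (child_exists Hi) as [c Hc], (child_exists Hi') as [c' Hc'].
      unfold G in Hv, Hb. rewrite child_formula_nth with (c := c) in Hv by auto.
      rewrite child_formula_nth with (c := c') in Hb by auto.
      apply (inv_bound_vars (child_invariant Hi' Hc')) in Hb.
      destruct (child_atom_vars Hi Hc Hv) as [(x & ->)|Hw]; [eapply Hfar; eauto|].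
      apply Hne. assert (E := quantified_within_children Hw Hb). congruence.
  - intros v Hv (i & Hb)%preds_inst_bound_vars. destruct (Aps v Hv) as [x ->]. eapply Hfar; eauto.
  - intros v Hv (i & Hb)%preds_inst_bound_vars. destruct (Aph v Hv) as [x ->]. eapply Hfar; eauto.
Qed.

Lemma form_II_typed_comps : typed_comps (chi (Node r ch) w sigma).
Proof.
  intros C q v. rewrite (proj1 chi_form_II_atoms). intros [Hv|Hv]%in_app_or.
  - apply head_inst_compatoms in Hv. destruct Hv as (C0 & q0 & x & Hx & E). injection E as <- <- ->.
    destruct HwfD as (Hwf & _). apply (proj2 (proj2 (proj2 (Hwf r Hr))) C q x).
    rewrite (proj1 (proj2 body_atoms)). auto.
  - apply (@preds_inst_collect _ (@compatoms S var') (fun _ _ => eq_refl) _) in Hv.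
    destruct Hv as (i & A & xs & c & Hi & Hc & Hv). exact (inv_typed_comps (child_invariant Hi Hc) Hv).
Qed.


Lemma preds_inst_compatoms C q v : In (C, q, v) (compatoms P') ->
  exists i A xs c p, nth_error (preds P) i = Some (A, xs) /\ nth_error ch i = Some c /\
    In (C, q, v) (compatoms (chi c (w ++ [Datatypes.S i]) (child_sigma c i xs))) /\
    sT T v = (w ++ [Datatypes.S i]) ++ p.
Proof.
  intros Hv. apply (@preds_inst_collect _ (@compatoms S var') (fun _ _ => eq_refl) _) in Hv.
  destruct Hv as (i & A & xs & c & Hi & Hc & Hv).
  destruct (inv_comps_within (child_invariant Hi Hc) Hv) as [p Hp]. exists i, A, xs, c, p. auto.
Qed.

Lemma form_II_comps_within C q v :
  In (C, q, v) (compatoms (chi (Node r ch) w sigma)) -> exists p, sT T v = w ++ p.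
Proof.
  rewrite (proj1 chi_form_II_atoms). intros [Hv|Hv]%in_app_or.
  - apply head_inst_compatoms in Hv. destruct Hv as (C0 & q0 & x & Hx & E). injection E as <- <- ->.
    exists []. rewrite app_nil_r. eapply head_value; eauto.
  - destruct (preds_inst_compatoms Hv) as (i & A & xs & c & p & _ & _ & _ & ->).
    exists (Datatypes.S i :: p). rewrite <- app_assoc. reflexivity.
Qed.

(* Each node contributes at most one component, located at its own position. *)
Lemma form_II_inj : inj_on_comps (chi (Node r ch) w sigma) (sT T).
Proof.
  intros C q v q' v'. rewrite (proj1 chi_form_II_atoms).
  intros [Hv|Hv]%in_app_or [Hv'|Hv']%in_app_or E.
  - apply head_inst_compatoms in Hv, Hv'.
    destruct Hv as (C0 & q0 & x & Hx & E1), Hv' as (C1 & q1 & x' & Hx' & E2).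
    injection E1 as _ _ ->. injection E2 as _ _ ->. f_equal. eapply head_compatoms_unique; eauto.
  - apply head_inst_compatoms in Hv. destruct Hv as (C0 & q0 & x & Hx & E1). injection E1 as _ _ ->.
    destruct (preds_inst_compatoms Hv') as (i & A & xs & c & p & _ & _ & _ & Ep).
    rewrite (head_value Hx), Ep in E. exfalso. exact (child_position_neq (eq_sym E)).
  - apply head_inst_compatoms in Hv'. destruct Hv' as (C0 & q0 & x & Hx & E1). injection E1 as _ _ ->.
    destruct (preds_inst_compatoms Hv) as (i & A & xs & c & p & _ & _ & _ & Ep).
    rewrite (head_value Hx), Ep in E. exfalso. exact (child_position_neq E).
  - destruct (preds_inst_compatoms Hv) as (i & A & xs & c & p & Hi & Hc & Ha & Ep).
    destruct (preds_inst_compatoms Hv') as (i' & A' & xs' & c' & p' & Hi' & Hc' & Ha' & Ep').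
    assert (i' = i) by (rewrite Ep, Ep' in E; apply child_positions_inj in E; congruence). subst i'.
    rewrite Hi in Hi'. injection Hi' as <- <-. rewrite Hc in Hc'. injection Hc' as <-.
    exact (inv_inj (child_invariant Hi Hc) Ha Ha' E).
Qed.

Lemma form_II_typed_interactions : typed_interactions (chi (Node r ch) w sigma).
Proof.
  destruct HwfD as (Hwf & _), HtD as (_ & HtF & _).
  destruct (Hwf r Hr) as (_ & _ & HiL & _).
  destruct (inst_iconj w G Hps rho 0) as (_ & _ & _ & _ & Ips & _). fold ps' in Ips.
  intros I vs. rewrite (proj1 chi_form_II_atoms), (proj1 (proj2 chi_form_II_atoms)).
  intros [Hv|Hv]%in_app_or.
  - apply Ips in Hv. destruct Hv as (I0 & xs & Hxs & E). injection E as <- ->.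
    rewrite <- (proj2 (proj2 (proj2 body_atoms))) in Hxs.
    split; [rewrite length_map; eauto|]. intros j v p Hj Hp.
    rewrite nth_error_map in Hj. destruct (nth_error xs j) as [x|] eqn:Hx; [|discriminate].
    injection Hj as <-.
    destruct (HtF r Hr I xs j x p Hxs Hx Hp) as [(C & q & Hq & <-)|(A & ys' & l & C & HA & Hl & HC & <-)].
    + exists q. apply in_or_app. left. apply head_inst_compatoms. exists (pcomp p), q, x.
      rewrite <- (proj1 (proj2 body_atoms)). auto.
    + rewrite (proj1 body_atoms) in HA. destruct (pred_arg_comp HA Hl HC) as [q Hq].
      exists q. apply in_or_app. auto.
  - apply (@preds_inst_collect _ (@intatoms S var') (fun _ _ => eq_refl) _) in Hv.
    destruct Hv as (i & A & xs & c & Hi & Hc & Hv).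
    destruct (inv_typed_interactions (child_invariant Hi Hc) Hv) as [Hl Hj]. split; auto.
    intros j v p Hjv Hp. destruct (Hj j v p Hjv Hp) as [q Hq]. exists q.
    apply in_or_app. right. eapply child_compatoms_in_preds_inst; eauto.
Qed.

Lemma form_II_profile l z C : nth_error (rparams r) l = Some z ->
  nth_error (lam (rhead r)) l = Some C ->
  exists q, In (C, q, sigma z) (compatoms (chi (Node r ch) w sigma)).
Proof.
  destruct HtD as (_ & _ & HtP). intros Hl HC.
  rewrite (proj1 chi_form_II_atoms), <- (rho_param (nth_error_In _ _ Hl)).
  destruct (HtP r l z Hr Hl) as (C2 & HC2 & [(q & Hq)|(B & ys' & l' & HB & Hl' & HCB)]);
    rewrite HC in HC2; injection HC2 as <-.
  - exists q. apply in_or_app. left. apply head_inst_compatoms. exists C, q, z.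
    rewrite <- (proj1 (proj2 body_atoms)). auto.
  - rewrite (proj1 body_atoms) in HB. destruct (pred_arg_comp HB Hl' HCB) as [q Hq].
    exists q. apply in_or_app. auto.
Qed.

Lemma form_II_atom_vars v : In v (atom_vars (chi (Node r ch) w sigma)) ->
  (exists x, In x (rparams r) /\ v = sigma x) \/ quantified_within w v.
Proof.
  destruct head_inst_shape as (_ & _ & _ & _ & Aph).
  destruct (inst_iconj w G Hps rho 0) as (_ & _ & _ & _ & _ & Aps). fold ps' in Aps.
  pose proof rho_cases as Hrho.
  rewrite (proj1 (proj2 (proj2 chi_form_II_atoms))).
  intros [Hv|[Hv|Hv]%in_app_or]%in_app_or.
  - destruct (Aph v Hv) as [x ->]. destruct (Hrho x) as [(x' & Hx' & E)|]; eauto.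
  - destruct (Aps v Hv) as [x ->]. destruct (Hrho x) as [(x' & Hx' & E)|]; eauto.
  - destruct (preds_inst_atom_vars Hv) as [(x & ->)|(i & Hw)].
    + destruct (Hrho x) as [(x' & Hx' & E)|]; eauto.
    + right. eapply quantified_within_child; eauto.
Qed.

Lemma form_II_bound_vars v :
  In v (bound_vars (chi (Node r ch) w sigma)) -> quantified_within w v.
Proof.
  rewrite (proj2 (proj2 (proj2 chi_form_II_atoms))). intros [Hv|Hv]%in_app_or.
  - apply in_map_iff in Hv. destruct Hv as (y & <- & _). exists [], y. rewrite app_nil_r. auto.
  - destruct (preds_inst_bound_vars Hv) as [i Hw]. eapply quantified_within_child; eauto.
Qed.

Lemma node_invariant_form_II : node_invariant (Node r ch) w sigma.
Proof.
  constructor; simpl label.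
  - exact form_II_hygienic.
  - exact form_II_typed_comps.
  - exact form_II_comps_within.
  - exact form_II_inj.
  - exact form_II_typed_interactions.
  - exact form_II_profile.
  - exact form_II_atom_vars.
  - exact form_II_bound_vars.
Qed.

End FormII.

Lemma node_invariant_placed t :
  rtree_ok D t -> forall w sigma, placed t w sigma -> node_invariant t w sigma.
Proof.
  induction t as [r ch IH] using rtree_nested_ind.
  intros Hok w sigma Hpl. inversion Hok as [r0 ch0 Hr Hlen Hhead Hch]; subst r0 ch0.
  destruct (Hforms Hr) as [FI|(ys & ph & ps & P & Hb & Hph & Hps & HP & Hnd & Hpargs)].
  - assert (ch = []) as ->.
    { destruct FI as (C & q & x & _ & Hb & _). rewrite Hb in Hlen. destruct ch; [auto|discriminate]. }
    apply node_invariant_form_I; auto.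
  - eapply node_invariant_form_II; eauto.
Qed.

End Invariant.

Theorem mainTheorem8 (S : sig) (D : list (rule S)) (lam : profile S)
  (Aphi : Pred S) (phi : form S nat) :
  wf_SID D ->
  tight_SID D lam ->
  (forall r, In r D -> form_I r \/ form_II r) ->
  In (mkRule Aphi [] phi) D ->
  fv phi = [] ->
  tight_form lam phi ->
  forall T : rtree S, in_R D (mkRule Aphi [] phi) T ->
  forall c : config S,
    (exists s : var' -> U, sat D (@vdec) s c (chiT T)) ->
    symmetric c (canon T).
Proof.
  intros HwfD HtD Hforms _ _ _ T [HokT HlT] c [s Hsat].
  assert (Hinv : node_invariant lam T T [] inl).
  { apply node_invariant_placed with (D := D); auto.
    unfold placed. rewrite HlT. repeat split; intros x []. }
  destruct (sat_describes Hsat (inv_hygienic Hinv)) as (g & _ & Hc & Hg).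
  apply (symmetric_same_config_l Hc).
  exact (symmetric_models (inv_typed_comps Hinv) (inv_typed_interactions Hinv) Hg (inv_inj Hinv)).
Qed.
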